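(* Let $\ell\ge1$ and let $w$ be an $\ell$-perfect word over $\{0,1\}$ such that $|w|$ is a multiple of $\ell2^{2\ell}$. Then there exists a $2\ell$-perfect word $z$ over $\{0,1\}$ of length $2|w|$ such that $\mathrm{even}(z)=w$.
   Context: For a finite word $z=a_1\cdots a_m$, $\mathrm{even}(z)=a_2a_4\cdots$ (symbols at even positions). For words $w,u$, $|w|^{al}_u=|\{i: w[i..i+|u|-1]=u,\ i\equiv1\bmod|u|\}|$. A finite binary word $w$ is $\ell$-perfect if $|w|$ is a multiple of $\ell$ and every word $u$ of length $\ell$ satisfies $|w|^{al}_u=|w|/(\ell2^\ell)$. *)

From mathcomp Require Import all_boot.
Set Implicit Arguments. Unset Strict Implicit. Unset Printing Implicit Defensive.

(* Binary words are [seq bool]; positions are 0-indexed internally. *)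

(* even z = a_2 a_4 ... : symbols at even 1-indexed positions, i.e. at
   0-indexed positions i with odd i. *)
Definition even_word (z : seq bool) : seq bool :=
  [seq nth false z i | i <- iota 0 (size z) & odd i].

Definition factor (w : seq bool) (i m : nat) : seq bool := take m (drop i w).

(* |w|^{al}_u : number of 1-indexed i with i = 1 mod |u| (0-indexed i
   divisible by |u|) such that w[i..i+|u|-1] = u (occurrence fully inside w). *)
Definition aligned_count (w u : seq bool) : nat :=
  count (fun i => (size u %| i) && (i + size u <= size w) && (factor w i (size u) == u))
        (iota 0 (size w)).

(* w is l-perfect: l | |w| and every u of length l satisfies
   |w|^{al}_u = |w| / (l 2^l)  (stated multiplicatively, exactly). *)
Definition perfect (l : nat) (w : seq bool) : Prop :=
  l %| size w /\
  forall u : seq bool, size u = l -> aligned_count w u * (l * 2 ^ l) = size w.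

From mathcomp Require Import all_boot zify.

Set Implicit Arguments.
Unset Strict Implicit.
Unset Printing Implicit Defensive.

(* Cut w into its blocks of length l: by perfection every word y of length l
   occurs c * 2^l times among them.  Pair the r-th occurrence of y with the
   (r mod 2^l)-th word x of length l and replace the block y by the
   interleaving x_1 y_1 ... x_l y_l.  The even letters of the result spell w,
   and each word interleave x y of length 2l now occurs exactly c times as a
   block, which is 2l-perfection. *)

Lemma count_iota_modn (M j c : nat) : j < M ->
  count (fun t => t %% M == j) (iota 0 (c * M)) = c.
Proof.
move=> lt_jM; elim: c => [|c IHc] //.
rewrite mulSn addnC iotaD count_cat IHc add0n -[c * M]addn0 iotaDl count_map.
rewrite (@eq_in_count _ _ (pred1 j)) => [|t]; last first.
  by rewrite mem_iota /= => lt_tM; rewrite modnMDl modn_small.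
by rewrite count_uniq_mem ?iota_uniq // mem_iota lt_jM addn1.
Qed.

Lemma count_iota_dvdn (l B : nat) (P : pred nat) : 0 < l ->
  count (fun i => (l %| i) && P i) (iota 0 (B * l)) =
  count (fun k => P (k * l)) (iota 0 B).
Proof.
case: l => // l _; elim: B => [|B IHB] //.
rewrite mulSn addnC iotaD count_cat IHB add0n -[B.+1]addn1 iotaD count_cat /=.
congr (_ + _); rewrite add0n addn0 dvdn_mull //= -[RHS]addn0; congr (_ + _).
apply/eqP; rewrite -leqn0 leqNgt -has_count; apply/hasPn => i.
rewrite mem_iota => /andP [lt_Bl_i lt_i].
rewrite -(subnKC (ltnW lt_Bl_i)) dvdn_addr ?dvdn_mull //.
apply/negP => /andP [/dvdn_leq le_l]; lia.
Qed.

Lemma count_prefix_rank (T : eqType) (x0 : T) (s : seq T) (y : T) (P : pred nat) :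
  count (fun i => (nth x0 s i == y) && P (count_mem y (take i s))) (iota 0 (size s)) =
  count P (iota 0 (count_mem y s)).
Proof.
elim/last_ind: s => [|s x IHs] //.
rewrite size_rcons -addn1 iotaD count_cat /= addn0.
rewrite -cats1 count_cat /= addn0 iotaD count_cat -IHs.
rewrite nth_cat ltnn subnn /= take_size_cat //.
congr (_ + _).
  apply: eq_in_count => i; rewrite mem_iota => /andP [_ lt_is].
  by rewrite nth_cat lt_is takel_cat // ltnW.
by case: (x == y); rewrite /= ?addn0.
Qed.

Lemma count_occurrence_modn (T : eqType) (x0 : T) (s : seq T) (y : T) (M j c : nat) :
  j < M -> count_mem y s = c * M ->
  count (fun i => (nth x0 s i == y) && (count_mem y (take i s) %% M == j))
        (iota 0 (size s)) = c.
Proof.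
move=> lt_jM count_y.
by rewrite (count_prefix_rank x0 s y (fun t => t %% M == j)) count_y count_iota_modn.
Qed.

Definition blocks (l : nat) (w : seq bool) : seq (seq bool) :=
  reshape (nseq (size w %/ l) l) w.

Lemma size_blocks l w : size (blocks l w) = size w %/ l.
Proof. by rewrite size_reshape size_nseq. Qed.

Lemma nth_blocks l w k : k < size w %/ l -> nth [::] (blocks l w) k = factor w (k * l) l.
Proof.
move=> lt_k; rewrite nth_reshape nth_nseq lt_k take_nseq ?sumn_nseq 1?ltnW //.
by rewrite mulnC.
Qed.

Lemma flatten_blocks l w : l %| size w -> flatten (blocks l w) = w.
Proof. by move=> dvd_l; rewrite reshapeKr // sumn_nseq mulnC divnK. Qed.

Lemma shape_uniform (T : Type) L (ss : seq (seq T)) :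
  all (fun s => size s == L) ss -> shape ss = nseq (size ss) L.
Proof. by elim: ss => [|s ss IHss] //= /andP [/eqP -> /IHss ->]. Qed.

Lemma size_flatten_uniform (T : Type) L (ss : seq (seq T)) :
  all (fun s => size s == L) ss -> size (flatten ss) = L * size ss.
Proof. by move=> /shape_uniform size_ss; rewrite size_flatten size_ss sumn_nseq. Qed.

Lemma blocks_flatten L (ss : seq (seq bool)) : 0 < L ->
  all (fun s => size s == L) ss -> blocks L (flatten ss) = ss.
Proof.
move=> L_gt0 size_ss; rewrite /blocks (size_flatten_uniform size_ss) mulKn //.
by rewrite -(shape_uniform size_ss) flattenK.
Qed.

Lemma all_size_blocks l w : l %| size w -> all (fun b => size b == l) (blocks l w).
Proof.
move=> /dvdnP [B size_w]; apply/(all_nthP [::]) => i; rewrite size_blocks => lt_i.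
have l_gt0 : 0 < l by case: l size_w lt_i => //; rewrite divn0.
rewrite nth_blocks // /factor size_takel // size_drop size_w -mulnBl leq_pmull //.
by move: lt_i; rewrite size_w mulnK // subn_gt0.
Qed.

Lemma aligned_count_blocks l w u : 0 < l -> l %| size w -> size u = l ->
  aligned_count w u = count_mem u (blocks l w).
Proof.
move=> l_gt0 /dvdnP [B size_w] size_u.
have sizeB : size w %/ l = B by rewrite size_w mulnK.
rewrite /aligned_count size_u size_w.
rewrite (eq_count (a2 := fun i =>
  (l %| i) && ((i + l <= B * l) && (factor w i l == u)))); last by move=> i; rewrite andbA.
rewrite count_iota_dvdn // -(mkseq_nth [::] (blocks l w)) size_blocks sizeB count_map.
apply: eq_in_count => k; rewrite mem_iota add0n => /andP [_ lt_kB].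
by rewrite /= nth_blocks ?sizeB // addnC -mulSn leq_mul2r lt_kB orbT.
Qed.

Fixpoint interleave (T : Type) (x y : seq T) : seq T :=
  if (x, y) is (a :: x', b :: y') then a :: b :: interleave x' y' else [::].

Lemma size_interleave (T : Type) (x y : seq T) :
  size x = size y -> size (interleave x y) = 2 * size x.
Proof. by elim: x y => [|a x IHx] [|b y] //= [/IHx ->]; rewrite mulnS. Qed.

Lemma eq_interleave (T : eqType) (x y x' y' : seq T) :
  size x = size y -> size x' = size y' ->
  (interleave x y == interleave x' y') = (x == x') && (y == y').
Proof.
move=> size_xy size_xy'; apply/eqP/andP => [|[/eqP -> /eqP ->]] //.
elim: x y x' y' size_xy size_xy' => [|a x IHx] [|b y] [|a' x'] [|b' y'] //=.
move=> [size_xy] [size_xy'].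
by move=> [-> -> /(IHx _ _ _ size_xy size_xy') [/eqP -> /eqP ->]].
Qed.

Lemma interleaveP (T : Type) (u : seq T) n : size u = 2 * n ->
  exists x y, [/\ size x = n, size y = n & u = interleave x y].
Proof.
elim: n u => [|n IHn] [|a [|b u]] //=; rewrite ?mulnS //; first by exists [::], [::].
move=> [/IHn [x [y [size_x size_y ->]]]].
by exists (a :: x), (b :: y); rewrite /= size_x size_y.
Qed.

Lemma even_word_cons2 a b s : even_word (a :: b :: s) = b :: even_word s.
Proof.
rewrite /even_word /=; congr (_ :: _).
rewrite (iotaDl 2 0) filter_map -map_comp (@eq_filter _ _ odd) // => i.
by rewrite /preim /= negbK.
Qed.

Lemma even_word_interleave_cat x y s : size x = size y ->
  even_word (interleave x y ++ s) = y ++ even_word s.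
Proof. by elim: x y => [|a x IHx] [|b y] //= [/IHx IH]; rewrite even_word_cons2 IH. Qed.

Lemma even_word_flatten_interleave (T : eqType) (X Y : T -> seq bool) (r : seq T) :
  {in r, forall t, size (X t) = size (Y t)} ->
  even_word (flatten [seq interleave (X t) (Y t) | t <- r]) = flatten (map Y r).
Proof.
elim: r => [|t r IHr] size_XY //=.
rewrite even_word_interleave_cat ?IHr ?size_XY ?mem_head // => t' r_t'.
by rewrite size_XY // inE r_t' orbT.
Qed.

Section Labels.

Variable l : nat.

Definition words : seq (seq bool) := [seq tval t | t <- enum {: l.-tuple bool}].

Lemma size_words : size words = 2 ^ l.
Proof. by rewrite size_map -cardE card_tuple card_bool. Qed.

Lemma words_uniq : uniq words.
Proof. by rewrite map_inj_uniq ?enum_uniq //; apply: val_inj. Qed.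

Lemma mem_words x : (x \in words) = (size x == l).
Proof.
apply/mapP/eqP => [[t _ ->]|size_x]; first exact: size_tuple.
by exists (Tuple (introT eqP size_x)); rewrite ?mem_enum.
Qed.

Definition label (s : seq (seq bool)) (i : nat) : seq bool :=
  nth [::] words (count_mem (nth [::] s i) (take i s) %% 2 ^ l).

Lemma size_label s i : size (label s i) = l.
Proof. by apply/eqP; rewrite -mem_words mem_nth // size_words ltn_mod expn_gt0. Qed.

Lemma count_label s x y c : size x = l -> count_mem y s = c * 2 ^ l ->
  count (fun i => (label s i == x) && (nth [::] s i == y)) (iota 0 (size s)) = c.
Proof.
move=> size_x count_y.
have x_words : x \in words by rewrite mem_words size_x.
have lt_x : index x words < 2 ^ l by rewrite -size_words index_mem.
rewrite -(count_occurrence_modn [::] lt_x count_y).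
apply: eq_count => i /=; rewrite andbC /label; case: (nth [::] s i =P y) => //= ->.
by rewrite -{1}(nth_index [::] x_words) nth_uniq ?words_uniq ?size_words ?ltn_mod ?expn_gt0.
Qed.

Definition paired_blocks (s : seq (seq bool)) : seq (seq bool) :=
  mkseq (fun i => interleave (label s i) (nth [::] s i)) (size s).

Lemma count_paired_blocks s x y c :
  all (fun b => size b == l) s -> size x = l -> size y = l ->
  count_mem y s = c * 2 ^ l -> count_mem (interleave x y) (paired_blocks s) = c.
Proof.
move=> /(all_nthP [::]) size_s size_x size_y count_y.
rewrite -(count_label size_x count_y) count_map; apply: eq_in_count => i.
rewrite mem_iota add0n => /andP [_ lt_i] /=.
by rewrite eq_interleave ?size_label ?size_x ?size_y //; apply/esym/eqP/size_s.
Qed.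

Lemma all_size_paired_blocks s :
  all (fun b => size b == l) s -> all (fun b => size b == 2 * l) (paired_blocks s).
Proof.
move=> /(all_nthP [::]) size_s; apply/allP => b /mapP [i].
rewrite mem_iota add0n => /andP [_ lt_i] ->.
by rewrite size_interleave size_label //; apply/esym/eqP/size_s.
Qed.

Lemma even_word_flatten_paired_blocks s :
  all (fun b => size b == l) s -> even_word (flatten (paired_blocks s)) = flatten s.
Proof.
move=> /(all_nthP [::]) size_s; rewrite even_word_flatten_interleave.
  by rewrite -[in RHS](mkseq_nth [::] s).
move=> i; rewrite mem_iota add0n => /andP [_ lt_i].
by rewrite size_label; apply/esym/eqP/size_s.
Qed.

Definition extension (w : seq bool) : seq bool := flatten (paired_blocks (blocks l w)).

Lemma size_extension w : l %| size w -> size (extension w) = 2 * size w.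
Proof.
move=> dvd_l.
rewrite (size_flatten_uniform (all_size_paired_blocks (all_size_blocks dvd_l))).
by rewrite size_mkseq size_blocks -mulnA [l * _]mulnC divnK.
Qed.

Lemma even_word_extension w : l %| size w -> even_word (extension w) = w.
Proof.
by move=> dvd_l; rewrite even_word_flatten_paired_blocks ?flatten_blocks ?all_size_blocks.
Qed.

Lemma perfect_extension w c : 0 < l -> size w = c * (l * 2 ^ (2 * l)) ->
  perfect l w -> perfect (2 * l) (extension w).
Proof.
move=> l_gt0 size_w [dvd_l perfect_w].
have count_blocks y : size y = l -> count_mem y (blocks l w) = c * 2 ^ l.
  move=> size_y; apply/eqP; rewrite -(@eqn_pmul2r (l * 2 ^ l)) ?muln_gt0 ?l_gt0 ?expn_gt0 //.
  by rewrite -aligned_count_blocks // perfect_w // size_w mul2n -addnn expnD; apply/eqP; nia.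
have size_z := size_extension dvd_l.
split=> [|u size_u]; first by rewrite size_z dvdn_pmul2l.
have [x [y [size_x size_y ->]]] := interleaveP size_u.
have all_size := all_size_blocks dvd_l.
rewrite (@aligned_count_blocks (2 * l)) ?muln_gt0 ?size_z ?dvdn_pmul2l //;
  last by rewrite size_interleave ?size_x.
rewrite blocks_flatten ?muln_gt0 ?all_size_paired_blocks //.
by rewrite (count_paired_blocks all_size size_x size_y (count_blocks y size_y)) size_w; nia.
Qed.

End Labels.

Theorem lemma10 (l : nat) (w : seq bool) :
  1 <= l -> perfect l w -> l * 2 ^ (2 * l) %| size w ->
  exists z : seq bool,
    perfect (2 * l) z /\ size z = 2 * size w /\ even_word z = w.
Proof.
move=> l_gt0 perfect_w /dvdnP [c size_w].
have dvd_l : l %| size w by rewrite size_w mulnCA dvdn_mulr.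
exists (extension l w); split; first exact: perfect_extension l_gt0 size_w perfect_w.
by rewrite size_extension ?even_word_extension.
Qed.
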